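(* Let $\Lambda$ be a germ at the origin of $\mathbb{K}^n$ ($\mathbb{K}=\mathbb{R}$ or $\mathbb{C}$; smooth, analytic or formal) of a Nambu structure of degree $q$, let $\Omega$ be a volume form, let $\omega=i_\Lambda\Omega$, and let $u$ be an invertible (nowhere vanishing) function germ. Then $DH(\mathcal{F}_\Lambda)\cong DH(\mathcal{F}_\omega)$ and $DH(\mathcal{F}_\Lambda)\cong DH(\mathcal{F}_{u\Lambda})$.
   Context: A differential $p$-form $\omega$ is integrable if for every $(p-1)$-vector field $A$: $\omega\wedge i_A\omega=0$ and $d\omega\wedge i_A\omega=0$. A $q$-vector field $\Lambda$ is a Nambu structure if $i_\Lambda\Omega$ is an integrable $(n-q)$-form for a volume form $\Omega$. A $p$-form $\eta$ is an infinitesimal deformation of an integrable $p$-form $\omega$ if for all $(p-1)$-vector fields $A$: $i_A\omega\wedge\eta+i_A\eta\wedge\omega=0$ and $i_A\omega\wedge d\eta+i_A\eta\wedge d\omega=0$; the set of these is $\mathcal{Z}(\omega)$. $\mathcal{Z}(\Lambda)$ is the set of $q$-vector fields $\Pi$ with $i_\Pi\Omega\in\mathcal{Z}(i_\Lambda\Omega)$. The trivial deformations of the foliation are $\mathcal{B}(\mathcal{F}_\Lambda)=\{\mathcal{L}_X\Lambda+f\Lambda\}$ and $\mathcal{B}(\mathcal{F}_\omega)=\{\mathcal{L}_X\omega+f\omega\}$, where $X$ ranges over vector field germs and $f$ over function germs. The deformation cohomologies are $DH(\mathcal{F}_\Lambda)=\mathcal{Z}(\Lambda)/\mathcal{B}(\mathcal{F}_\Lambda)$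 and $DH(\mathcal{F}_\omega)=\mathcal{Z}(\omega)/\mathcal{B}(\mathcal{F}_\omega)$. *)

(* Germs of multivector fields / differential forms on K^n,
   in coordinates: an element of the exterior algebra is the family of its
   coefficients indexed by subsets I of {0,..,n-1} (basis d_I = d_{i1}/\..., i1<...<ik,
   resp. dx_I).  Function germs form a commutative K-algebra A with the n
   commuting coordinate partial derivatives D i. *)
From HB Require Import structures.
From mathcomp Require Import all_boot all_order all_algebra.
Set Implicit Arguments. Unset Strict Implicit. Unset Printing Implicit Defensive.
Import Order.TTheory GRing.Theory Num.Theory.
Local Open Scope ring_scope.

Section Ext.
Variables (K : numFieldType) (A : comUnitAlgType K) (n : nat).

Notation ext := {ffun {set 'I_n} -> A}.

Definition coord_derivations (D : 'I_n -> A -> A) : Prop :=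
  [/\ forall i (k : K) x y, D i (k *: x + y) = k *: D i x + D i y,
      forall i x y, D i (x * y) = D i x * y + x * D i y
    & forall i j x, D i (D j x) = D j (D i x)].

Definition homog (k : nat) (a : ext) : Prop := forall I : {set 'I_n}, #|I| != k -> a I = 0.

(* "A is a (p-1)-vector field" (there are none when p = 0) *)
Definition pm1vec (p : nat) (a : ext) : Prop := (0 < p)%N /\ homog p.-1 a.

(* sign with e_I /\ e_J = esign I J e_(I u J) for disjoint I, J *)
Definition esign (I J : {set 'I_n}) : A :=
  (-1) ^+ #|[set p : 'I_n * 'I_n | [&& p.1 \in I, p.2 \in J & (p.2 < p.1)%N]]|.

Definition ebase (I : {set 'I_n}) : ext := [ffun J => (J == I)%:R].

Definition mscale (f : A) (a : ext) : ext := [ffun I => f * a I].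

Definition wedge (a b : ext) : ext :=
  [ffun L : {set 'I_n} => \sum_(I : {set 'I_n}) \sum_(J : {set 'I_n} | [disjoint I & J] && (I :|: J == L))
                esign I J * a I * b J].

(* interior product i_P w of a multivector P into a form w:
   i_(d_I) (dx_I /\ dx_L) = dx_L *)
Definition iprod (P w : ext) : ext :=
  [ffun L : {set 'I_n} => \sum_(I : {set 'I_n} | [disjoint I & L]) esign I L * P I * w (I :|: L)].

Section WithD.
Variable D : 'I_n -> A -> A.

Definition dext (w : ext) : ext :=
  [ffun L : {set 'I_n} => \sum_(i in L) esign [set i] (L :\ i) * D i (w (L :\ i))].

(* Lie derivative of a form along a vector field X (Cartan formula) *)
Definition lie_form (X w : ext) : ext := iprod X (dext w) + dext (iprod X w).

(* Lie derivative (Schouten bracket [X, P]) of a multivector field P along X: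
   [X, f d_I] = X(f) d_I + f [X, d_I],  [X, d_i] = - sum_j D_i(X_j) d_j *)
Definition lie_mv (X P : ext) : ext :=
  [ffun L : {set 'I_n} => \sum_(j : 'I_n) X [set j] * D j (P L)]
  - \sum_(I : {set 'I_n}) \sum_(i in I) \sum_(j : 'I_n)
        mscale (P I * D i (X [set j]) * esign [set i] (I :\ i))
               (wedge (ebase [set j]) (ebase (I :\ i))).

Definition volume_form (Om : ext) : Prop := homog n Om /\ Om setT \is a GRing.unit.

Definition integrable (p : nat) (w : ext) : Prop :=
  homog p w /\
  forall P : ext, pm1vec p P ->
    wedge w (iprod P w) = 0 /\ wedge (dext w) (iprod P w) = 0.

Definition nambu (q : nat) (Lam : ext) : Prop :=
  homog q Lam /\ exists Om, volume_form Om /\ integrable (n - q) (iprod Lam Om).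

Definition Zform (p : nat) (w eta : ext) : Prop :=
  homog p eta /\
  forall P : ext, pm1vec p P ->
    wedge (iprod P w) eta + wedge (iprod P eta) w = 0 /\
    wedge (iprod P w) (dext eta) + wedge (iprod P eta) (dext w) = 0.

Definition Zmv (q : nat) (Om Lam Pi : ext) : Prop :=
  homog q Pi /\ Zform (n - q) (iprod Lam Om) (iprod Pi Om).

Definition Bmv (Lam Pi : ext) : Prop :=
  exists X f, homog 1 X /\ Pi = lie_mv X Lam + mscale f Lam.
Definition Bform (w eta : ext) : Prop :=
  exists X f, homog 1 X /\ eta = lie_form X w + mscale f w.
End WithD.
End Ext.

(* Z1/B1 ~= Z2/B2 as K-vector spaces: a K-linear map sending Z1 into Z2
   inducing a bijection Z1/B1 -> Z2/B2. *)
Definition subquot_iso (K : numFieldType) (V W : lmodType K)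
    (Z1 B1 : V -> Prop) (Z2 B2 : W -> Prop) : Prop :=
  exists f : V -> W,
    [/\ forall (k : K) x y, f (k *: x + y) = k *: f x + f y,
        forall x, Z1 x -> Z2 (f x),
        forall y, Z2 y -> exists2 x, Z1 x & B2 (f x - y)
      & forall x, Z1 x -> (B2 (f x) <-> B1 x)].

(* Contraction with a volume form, P |-> i_P Om, is a linear bijection from
   q-vector fields onto (n-q)-forms, so it maps Z(Lam) onto Z(i_Lam Om) by
   definition.  It also matches the trivial deformations, because
   L_X (i_Lam Om) = i_[X,Lam] Om + div_Om(X) i_Lam Om and the correction is a
   function multiple of i_Lam Om.  Rescaling by a unit u maps Z(Lam) onto
   Z(u Lam), since Z(v w) contains v Z(w) for every function v, and
   [X, u Lam] = u [X, Lam] + X(u) Lam again differs from u [X, Lam] by a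
   multiple of Lam. *)

From HB Require Import structures.
From mathcomp Require Import all_boot all_order all_algebra.
From mathcomp Require Import zify ring.
Import GRing.Theory.
Set Implicit Arguments. Unset Strict Implicit. Unset Printing Implicit Defensive.
Local Open Scope ring_scope.

Lemma signr_mod2 (R : pzRingType) (x y : nat) :
  (x %% 2 = y %% 2)%N -> (-1 : R) ^+ x = (-1) ^+ y.
Proof. by rewrite !modn2 => h; rewrite -[LHS]signr_odd h signr_odd. Qed.

Lemma oppr_sign (R : pzRingType) (k : nat) : - (-1 : R) ^+ k = (-1) ^+ k.+1.
Proof. by rewrite exprS mulN1r. Qed.

Lemma big_card1 (T : finType) (V : nmodType) (F : {set T} -> V) (P : pred {set T}) :
  (forall I : {set T}, #|I| != 1%N -> F I = 0) ->
  \sum_(I | P I) F I = \sum_(j | P [set j]) F [set j].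
Proof.
move=> F0.
rewrite (eq_bigr (fun I : {set T} => \sum_(j | I == [set j]) F [set j])); last first.
  move=> I _; case: (boolP (#|I| == 1%N)) => [/cards1P [x ->] | nI].
    by rewrite (big_pred1 x) // => j; rewrite /= (inj_eq set1_inj) eq_sym.
  by rewrite F0 // big1 // => j /eqP hj; move: nI; rewrite hj cards1.
rewrite (exchange_big_dep predT) //= [RHS]big_mkcond /=.
apply: eq_bigr => j _; case: (boolP (P [set j])) => Pj.
  by rewrite (big_pred1 [set j]) // => I /=; case: eqP => [->|]; rewrite ?andbF ?andbT.
by rewrite big_pred0 // => I /=; case: eqP => [->|]; rewrite ?andbF ?andbT ?(negbTE Pj).
Qed.

Section Signs.
Variables (K : numFieldType) (A : comUnitAlgType K) (n : nat).
Implicit Types (I J C L M : {set 'I_n}) (i j : 'I_n).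
Notation es := (esign A).

Definition inversions I J :=
  #|[set p : 'I_n * 'I_n | [&& p.1 \in I, p.2 \in J & (p.2 < p.1)%N]]|.

Lemma esignE I J : es I J = (-1) ^+ inversions I J.
Proof. by []. Qed.

Lemma esign_sqr I J : es I J * es I J = 1.
Proof. by rewrite -expr2 esignE sqrr_sign. Qed.

Lemma inversionsUl I J C : [disjoint I & J] ->
  inversions (I :|: J) C = (inversions I C + inversions J C)%N.
Proof.
move=> dIJ; rewrite /inversions -cardsUI.
have -> : [set p : 'I_n * 'I_n | [&& p.1 \in I, p.2 \in C & (p.2 < p.1)%N]] :&:
          [set p : 'I_n * 'I_n | [&& p.1 \in J, p.2 \in C & (p.2 < p.1)%N]] = set0.
  apply/setP=> p; rewrite !inE.
  by case: (boolP (p.1 \in I)) => // /(disjointFr dIJ) ->; rewrite andbF.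
rewrite cards0 addn0; apply: eq_card => p; rewrite !inE.
by case: (_ \in I); case: (_ \in J); rewrite /= ?orbb ?orbF.
Qed.

Lemma inversionsUr I J C : [disjoint J & C] ->
  inversions I (J :|: C) = (inversions I J + inversions I C)%N.
Proof.
move=> dJC; rewrite /inversions -cardsUI.
have -> : [set p : 'I_n * 'I_n | [&& p.1 \in I, p.2 \in J & (p.2 < p.1)%N]] :&:
          [set p : 'I_n * 'I_n | [&& p.1 \in I, p.2 \in C & (p.2 < p.1)%N]] = set0.
  apply/setP=> p; rewrite !inE.
  by case: (boolP (p.2 \in J)) => [/(disjointFr dJC) -> | _]; rewrite !andbF.
rewrite cards0 addn0; apply: eq_card => p; rewrite !inE.
by case: (_ \in J); case: (_ \in C); rewrite /= ?andbF ?andbT ?orbF ?orbb ?andbb.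
Qed.

Lemma inversionsC I J : [disjoint I & J] ->
  (inversions I J + inversions J I = #|I| * #|J|)%N.
Proof.
move=> dIJ; rewrite /inversions mulnC -cardsX.
rewrite -(card_preimset _ (can_inj (@swap_pairK _ _))) -cardsUI.
rewrite (_ : _ :&: _ = set0); last first.
  by apply/setP=> p; rewrite !inE /=; case: (ltngtP p.1 p.2); rewrite ?andbF.
rewrite cards0 addn0; apply: eq_card => -[a b]; rewrite !inE /=.
case: (boolP (a \in J)) => aJ /=; rewrite ?andbF //.
case: (boolP (b \in I)) => bI /=; rewrite ?andbF //.
have : a != b by apply: contraTneq aJ => ->; rewrite (disjointFr dIJ bI).
by rewrite neq_ltn.
Qed.

Lemma inversions11 i j : i != j ->
  (inversions [set i] [set j] + inversions [set j] [set i] = 1)%N.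
Proof. by move=> ij; rewrite inversionsC ?cards1 // disjoints1 in_set1. Qed.

(* Instances of [dx_i /\ dx_j = - dx_j /\ dx_i]. *)
Lemma esign_swap1 i j M : i != j -> i \notin M -> j \notin M ->
  es [set i] (j |: M) * es [set j] M = - (es [set j] (i |: M) * es [set i] M).
Proof.
move=> ij iM jM; rewrite !esignE -!exprD oppr_sign; apply: signr_mod2.
rewrite !inversionsUr ?disjoints1 //; have := inversions11 ij; lia.
Qed.

Lemma esign_swap1' i j M : i != j -> i \notin M -> j \notin M ->
  es [set j] (i |: M) * es [set i] (j |: M) = - (es [set i] M * es [set j] M).
Proof.
move=> ij iM jM; rewrite !esignE -!exprD oppr_sign; apply: signr_mod2.
rewrite !inversionsUr ?disjoints1 //; have := inversions11 ij; lia.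
Qed.

Lemma esign_swap2 i j M L : i != j -> i \notin L -> j \notin L ->
  i \notin M -> j \notin M -> [disjoint M & L] ->
  es [set i] L * es [set j] L * es (i |: M) (j |: L) =
  - (es (j |: M) (i |: L) * es [set i] M * es [set j] M).
Proof.
move=> ij iL jL iM jM dML; rewrite !esignE -!exprD oppr_sign; apply: signr_mod2.
rewrite !inversionsUl ?disjoints1 // !inversionsUr ?disjoints1 //.
have := inversionsC (_ : [disjoint [set i] & M]); rewrite disjoints1 => /(_ iM).
have := inversionsC (_ : [disjoint [set j] & M]); rewrite disjoints1 => /(_ jM).
have := inversions11 ij; rewrite !cards1 !mul1n; lia.
Qed.

End Signs.

Section Exterior.
Variables (K : numFieldType) (A : comUnitAlgType K) (n : nat).
Notation ext := {ffun {set 'I_n} -> A}.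
Notation es := (esign A).
Implicit Types (I J L M : {set 'I_n}) (P Q w x y a b : ext) (f g : A).

Lemma mscaleE f x I : mscale f x I = f * x I.
Proof. by rewrite ffunE. Qed.

Lemma mscaleDr f x y : mscale f (x + y) = mscale f x + mscale f y.
Proof. by apply/ffunP => I; rewrite !ffunE mulrDr. Qed.

Lemma mscaleNr f x : mscale f (- x) = - mscale f x.
Proof. by apply/ffunP => I; rewrite !ffunE mulrN. Qed.

Lemma mscaleDl f g x : mscale (f + g) x = mscale f x + mscale g x.
Proof. by apply/ffunP => I; rewrite !ffunE mulrDl. Qed.

Lemma mscaleNl f x : mscale (- f) x = - mscale f x.
Proof. by apply/ffunP => I; rewrite !ffunE mulNr. Qed.

Lemma mscaler0 f : mscale f (0 : ext) = 0.
Proof. by apply/ffunP => I; rewrite !ffunE mulr0. Qed.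

Lemma mscale0r x : mscale 0 x = 0.
Proof. by apply/ffunP => I; rewrite !ffunE mul0r. Qed.

Lemma mscale1 x : mscale 1 x = x.
Proof. by apply/ffunP => I; rewrite !ffunE mul1r. Qed.

Lemma mscaleA f g x : mscale f (mscale g x) = mscale (f * g) x.
Proof. by apply/ffunP => I; rewrite !ffunE mulrA. Qed.

Lemma mscale_sum f (T : Type) (r : seq T) (p : pred T) (F : T -> ext) :
  mscale f (\sum_(k <- r | p k) F k) = \sum_(k <- r | p k) mscale f (F k).
Proof.
apply/ffunP => L; rewrite ffunE !sum_ffunE mulr_sumr.
by apply: eq_bigr => k _; rewrite ffunE.
Qed.

Lemma homog0 k : homog k (0 : ext).
Proof. by move=> I _; rewrite ffunE. Qed.

Lemma homog_mscale k f x : homog k x -> homog k (mscale f x).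
Proof. by move=> h I hI; rewrite ffunE h ?mulr0. Qed.

Lemma homog_iprod j k P w : homog j P -> homog k w -> (j <= k)%N ->
  homog (k - j) (iprod P w).
Proof.
move=> hP hw jk L hL; rewrite ffunE big1 // => I dIL.
case: (boolP (#|I| == j)) => [/eqP cI | nI]; last by rewrite hP ?mulr0 ?mul0r.
rewrite hw ?mulr0 // cardsU disjoint_setI0 // cards0 subn0 cI.
by apply: contra hL => /eqP <-; rewrite addKn.
Qed.

Lemma homog1_iprod p P w : pm1vec p P -> homog p w -> homog 1 (iprod P w).
Proof.
by case=> p0 hP hw; have := homog_iprod hP hw (leq_pred p); rewrite -subn1 subKn.
Qed.

Lemma iprodDl P Q w : iprod (P + Q) w = iprod P w + iprod Q w.
Proof.
apply/ffunP => L; rewrite !ffunE -big_split /=; apply: eq_bigr => I _.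
by rewrite ffunE mulrDr mulrDl.
Qed.

Lemma iprod_linearl (k : K) P Q w : iprod (k *: P + Q) w = k *: iprod P w + iprod Q w.
Proof.
apply/ffunP => L; rewrite !ffunE scaler_sumr -big_split /=; apply: eq_bigr => I _.
by rewrite !ffunE mulrDr mulrDl -scalerAr -scalerAl.
Qed.

Lemma iprod0l w : iprod 0 w = 0.
Proof.
by apply/ffunP => L; rewrite !ffunE big1 // => I _; rewrite ffunE mulr0 mul0r.
Qed.

Lemma iprod_mscalel f P w : iprod (mscale f P) w = mscale f (iprod P w).
Proof.
apply/ffunP => L; rewrite !ffunE mulr_sumr; apply: eq_bigr => I _.
by rewrite ffunE mulrCA !mulrA.
Qed.

Lemma iprod_mscaler f P w : iprod P (mscale f w) = mscale f (iprod P w).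
Proof.
apply/ffunP => L; rewrite !ffunE mulr_sumr; apply: eq_bigr => I _.
by rewrite ffunE mulrCA !mulrA [f * _]mulrC -!mulrA.
Qed.

Lemma wedge_mscalel f a b : wedge (mscale f a) b = mscale f (wedge a b).
Proof.
apply/ffunP => L; rewrite !ffunE mulr_sumr; apply: eq_bigr => I _.
by rewrite mulr_sumr; apply: eq_bigr => J _; rewrite ffunE mulrCA !mulrA.
Qed.

Lemma wedge_mscaler f a b : wedge a (mscale f b) = mscale f (wedge a b).
Proof.
apply/ffunP => L; rewrite !ffunE mulr_sumr; apply: eq_bigr => I _.
by rewrite mulr_sumr; apply: eq_bigr => J _; rewrite ffunE mulrCA.
Qed.

Lemma wedgeDr a b c : wedge a (b + c) = wedge a b + wedge a c.
Proof.
apply/ffunP => L; rewrite !ffunE -big_split; apply: eq_bigr => I _ /=.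
by rewrite -big_split; apply: eq_bigr => J _ /=; rewrite ffunE mulrDr.
Qed.

Section VolumeForm.
Variable Om : ext.
Hypothesis homog_Om : homog n Om.

Lemma homogn_eq0 M : M != setT -> Om M = 0.
Proof.
move=> MT; apply: homog_Om; apply: contra MT => /eqP cM.
by rewrite eqEcard subsetT cardsT card_ord cM leqnn.
Qed.

Lemma iprod_volumeE P L : iprod P Om L = es (~: L) L * P (~: L) * Om setT.
Proof.
rewrite ffunE (bigD1 (~: L)) /=; last by rewrite disjoints_subset.
rewrite setUC setUCr big1 ?addr0 // => I /andP [dIL IL].
rewrite homogn_eq0 ?mulr0 //; apply: contraNneq IL => IUL.
apply/eqP/setP => x; move/setP/(_ x): IUL; rewrite !inE => hx.
case: (boolP (x \in L)) => xL; first by rewrite (disjointFl dIL xL).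
by move: hx; rewrite (negbTE xL) orbF.
Qed.

Hypothesis unit_Om : Om setT \is a GRing.unit.

Lemma iprod_volume_inj : injective (fun P => iprod P Om).
Proof.
move=> x y exy; apply/ffunP => I.
have := congr1 (fun w : ext => w (~: I)) exy; rewrite /= !iprod_volumeE setCK.
rewrite -!mulrA => /(congr1 (fun t => es I (~: I) * t)).
rewrite !mulrA esign_sqr !mul1r => /(congr1 (fun t => t / Om setT)).
by rewrite !mulrK.
Qed.

Lemma iprod_volume_surj k w : (k <= n)%N -> homog (n - k) w ->
  exists2 P, homog k P & iprod P Om = w.
Proof.
move=> kn hw; exists [ffun I => es I (~: I) * w (~: I) / Om setT].
  move=> I hI; rewrite ffunE hw ?mulr0 ?mul0r //.
  by have := cardsC I; rewrite card_ord; lia.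
apply/ffunP => L; rewrite iprod_volumeE ffunE setCK.
by rewrite !mulrA esign_sqr mul1r mulrVK.
Qed.

End VolumeForm.

Lemma iprod_vectorE X w L : homog 1 X ->
  iprod X w L = \sum_(j | j \notin L) es [set j] L * X [set j] * w (j |: L).
Proof.
move=> hX; rewrite ffunE (@big_card1 _ _ (fun I : {set 'I_n} => es I L * X I * w (I :|: L))).
  by apply: eq_bigl => j; rewrite disjoints1.
by move=> I hI; rewrite hX ?mulr0 ?mul0r.
Qed.

(* [wedge1 c x] is [(\sum_i c i dx_i) /\ x]. *)
Definition wedge1 (c : 'I_n -> A) x : ext :=
  [ffun L : {set 'I_n} => \sum_(i in L) es [set i] (L :\ i) * c i * x (L :\ i)].

Lemma wedge1E a x : homog 1 a -> wedge a x = wedge1 (fun i => a [set i]) x.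
Proof.
move=> ha; apply/ffunP => L; rewrite !ffunE (@big_card1 _ _ (fun I : {set 'I_n} =>
  \sum_(J : {set 'I_n} | [disjoint I & J] && (I :|: J == L)) es I J * a I * x J)); last first.
  by move=> I hI; rewrite big1 // => J _; rewrite ha ?mulr0 ?mul0r.
rewrite [RHS]big_mkcond /=; apply: eq_bigr => j _.
case: (boolP (j \in L)) => jL.
  rewrite (big_pred1 (L :\ j)) // => J /=; rewrite disjoints1.
  apply/andP/eqP => [[jJ /eqP <-]|->]; first by rewrite setU1K.
  by rewrite setD1K // setD11 eqxx.
rewrite big_pred0 // => J /=; apply/negP => /andP [_ /eqP LE].
by move: jL; rewrite -LE setU11.
Qed.

Lemma wedge1D c x y : wedge1 c (x + y) = wedge1 c x + wedge1 c y.
Proof.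
apply/ffunP => L; rewrite !ffunE -big_split; apply: eq_bigr => i _ /=.
by rewrite ffunE mulrDr.
Qed.

Lemma wedge10 c : wedge1 c 0 = 0.
Proof. by apply/ffunP => L; rewrite !ffunE big1 // => i _; rewrite ffunE mulr0. Qed.

Lemma wedge1C c d x : wedge1 c (wedge1 d x) = - wedge1 d (wedge1 c x).
Proof.
apply/ffunP => L; rewrite !ffunE -sumrN.
under eq_bigr => i _ do rewrite ffunE mulr_sumr.
under [RHS]eq_bigr => j _ do rewrite ffunE mulr_sumr -sumrN.
rewrite [RHS](exchange_big_dep (fun i => i \in L)) /=; last first.
  by move=> j i _; rewrite in_setD1 => /andP [].
apply: eq_bigr => i iL; rewrite [RHS](eq_bigl (fun j => j \in L :\ i)); last first.
  by move=> j; rewrite !in_setD1 iL andbT andbC eq_sym.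
apply: eq_bigr => j; rewrite in_setD1 => /andP [ji jL].
set M := L :\ i :\ j.
have eMC : L :\ j :\ i = M by rewrite /M !setDDl setUC.
have eLi : L :\ i = j |: M by rewrite /M setD1K // in_setD1 ji.
have eLj : L :\ j = i |: M by rewrite -eMC setD1K // in_setD1 eq_sym ji.
have iM : i \notin M by rewrite -eMC in_setD1 eqxx.
have jM : j \notin M by rewrite /M in_setD1 eqxx.
rewrite eMC eLi eLj.
have ij : i != j by rewrite eq_sym.
transitivity ((es [set i] (j |: M) * es [set j] M) * (c i * d j * x M)); first by ring.
by rewrite (esign_swap1 A ij iM jM); ring.
Qed.

Lemma homog1_ebase (j : 'I_n) : homog 1 (ebase A [set j]).
Proof.
move=> I hI; rewrite /ebase ffunE; case: eqP => // eI.
by move: hI; rewrite eI cards1.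
Qed.

Lemma wedge_ebaseE (j : 'I_n) J M :
  wedge (ebase A [set j]) (ebase A J) M =
  if (j \in M) && (M :\ j == J) then es [set j] (M :\ j) else 0.
Proof.
rewrite wedge1E; last exact: homog1_ebase.
rewrite ffunE; case: (boolP (j \in M)) => jM /=.
  rewrite (bigD1 j) //= big1 ?addr0.
    by rewrite /ebase !ffunE eqxx mulr1; case: eqP => _; rewrite ?mulr1 ?mulr0.
  move=> i /andP [_ ij]; rewrite /ebase !ffunE.
  by rewrite (inj_eq set1_inj) (negbTE ij) mulr0 mul0r.
rewrite big1 // => i iM; rewrite /ebase !ffunE (inj_eq set1_inj).
by case: eqP => [eij|]; [move: jM; rewrite -eij iM | rewrite mulr0 mul0r].
Qed.

End Exterior.

Section Derivations.
Variables (K : numFieldType) (A : comUnitAlgType K) (n : nat).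
Variable D : 'I_n -> A -> A.
Hypothesis hD : coord_derivations D.
Notation ext := {ffun {set 'I_n} -> A}.
Notation es := (esign A).
Implicit Types (I J L M : {set 'I_n}) (P X w x : ext) (f g : A).

Lemma derD i f g : D i (f + g) = D i f + D i g.
Proof. by case: hD => lin _ _; have := lin i 1 f g; rewrite !scale1r. Qed.

Lemma der0 i : D i 0 = 0.
Proof. by apply/(addrI (D i 0)); rewrite -derD !addr0. Qed.

Lemma derN i f : D i (- f) = - D i f.
Proof. by case: hD => lin _ _; rewrite -[- f]addr0 -scaleN1r lin der0 addr0 scaleN1r. Qed.

Lemma derM i f g : D i (f * g) = D i f * g + f * D i g.
Proof. by case: hD. Qed.

Lemma der_sum i (T : Type) (r : seq T) (p : pred T) (F : T -> A) :
  D i (\sum_(k <- r | p k) F k) = \sum_(k <- r | p k) D i (F k).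
Proof. exact: (big_morph (D i) (derD i) (der0 i)). Qed.

Lemma der_esign i I J f : D i (es I J * f) = es I J * D i f.
Proof.
rewrite esignE; elim: (inversions I J) => [|m IH]; first by rewrite !mul1r.
by rewrite !exprS !mulN1r !mulNr derN IH.
Qed.

Definition vder X f := \sum_(j < n) X [set j] * D j f.

Lemma dext0 : dext D 0 = 0.
Proof. by apply/ffunP => L; rewrite !ffunE big1 // => i _; rewrite ffunE der0 mulr0. Qed.

Lemma dext_mscale f x :
  dext D (mscale f x) = mscale f (dext D x) + wedge1 (fun i => D i f) x.
Proof.
apply/ffunP => L; rewrite !ffunE mulr_sumr -big_split /=; apply: eq_bigr => i _.
by rewrite ffunE derM; ring.
Qed.

Lemma lie_form0 w : lie_form D 0 w = 0.
Proof. by rewrite /lie_form !iprod0l dext0 addr0. Qed.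

Lemma lie_mv0 P : lie_mv D 0 P = 0.
Proof.
apply/ffunP => L; rewrite !ffunE big1 ?sum_ffunE ?big1 ?subrr // => [I _|j _].
  rewrite sum_ffunE big1 // => i _; rewrite sum_ffunE big1 // => j _.
  by rewrite !ffunE der0 mulr0 mul0r mul0r.
by rewrite ffunE mul0r.
Qed.

Lemma lie_mv_mscale X f P :
  lie_mv D X (mscale f P) = mscale f (lie_mv D X P) + mscale (vder X f) P.
Proof.
rewrite /lie_mv mscaleDr mscaleNr addrAC; congr (_ - _).
  apply/ffunP => L; rewrite !ffunE /vder mulr_sumr mulr_suml -big_split /=.
  by apply: eq_bigr => j _; rewrite derM; ring.
rewrite mscale_sum; apply: eq_bigr => I _; rewrite mscale_sum; apply: eq_bigr => i _.
by rewrite mscale_sum; apply: eq_bigr => j _; rewrite mscaleA mscaleE !mulrA.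
Qed.

(* The [d v]-terms cancel: with the 1-forms [a := i_P w] and [b := i_P eta],
   [a /\ dv /\ eta + b /\ dv /\ w = - dv /\ (a /\ eta + b /\ w) = 0]. *)
Lemma Zform_mscale p w eta v : homog p w ->
  Zform D p w eta -> Zform D p (mscale v w) (mscale v eta).
Proof.
move=> hw [heta Zeta]; split; first exact: homog_mscale.
move=> P pP; have [Z1 Z2] := Zeta P pP.
have ha := homog1_iprod pP hw; have hb := homog1_iprod pP heta.
rewrite !iprod_mscaler !wedge_mscalel !wedge_mscaler !mscaleA -mscaleDr Z1 mscaler0.
split=> //; rewrite !dext_mscale !wedgeDr !wedge_mscaler !(wedge1E _ ha) !(wedge1E _ hb).
rewrite (wedge1C (fun i => iprod P w [set i])) (wedge1C (fun i => iprod P eta [set i])).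
move: Z1 Z2; rewrite !(wedge1E _ ha) !(wedge1E _ hb) => Z1 Z2.
rewrite -mscaleDr addrACA -mscaleDr Z2 mscaler0 add0r.
by rewrite -opprD -wedge1D Z1 wedge10 oppr0 mscaler0.
Qed.

Lemma Zmv_mscale q Om Lam Pi v : homog q Lam -> homog n Om -> (q <= n)%N ->
  Zmv D q Om Lam Pi -> Zmv D q Om (mscale v Lam) (mscale v Pi).
Proof.
move=> hL hO qn [hPi Z]; split; first exact: homog_mscale.
by rewrite !iprod_mscalel; apply: Zform_mscale => //; apply: homog_iprod.
Qed.

Lemma iprod_dextE X w L : homog 1 X ->
  iprod X (dext D w) L = \sum_(j | j \notin L) X [set j] * D j (w L)
   - \sum_(i in L) \sum_(j | j \notin L)
       es [set i] (L :\ i) * es [set j] (L :\ i) * X [set j] * D i (w (j |: (L :\ i))).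
Proof.
move=> hX; rewrite iprod_vectorE // [X in _ - X]exchange_big /= -sumrB.
apply: eq_bigr => j jL; rewrite ffunE big_setU1 //= setU1K // mulrDr mulr_sumr -sumrN.
congr (_ + _); first by rewrite -[RHS]mul1r -(esign_sqr A [set j] L); ring.
apply: eq_bigr => i iL.
have ij : i != j by apply: contraNneq jL => <-.
have eLi : L = i |: (L :\ i) by rewrite setD1K.
have ejL : (j |: L) :\ i = j |: (L :\ i).
  by apply/setP => k; rewrite !inE; case: eqP => [->|]; rewrite ?(negbTE ij) ?andbT.
have iLi : i \notin L :\ i by rewrite in_setD1 eqxx.
have jLi : j \notin L :\ i by rewrite in_setD1 (negbTE jL) andbF.
rewrite ejL {1}eLi.
transitivity (es [set j] (i |: L :\ i) * es [set i] (j |: L :\ i) *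
              (X [set j] * D i (w (j |: L :\ i)))); first by ring.
by rewrite (esign_swap1' A ij iLi jLi); ring.
Qed.

Lemma dext_iprodE X w L : homog 1 X ->
  dext D (iprod X w) L =
    \sum_(i in L) (D i (X [set i]) * w L + X [set i] * D i (w L))
  + \sum_(i in L) \sum_(j | j \notin L)
       es [set i] (L :\ i) * es [set j] (L :\ i) * D i (X [set j]) * w (j |: (L :\ i))
  + \sum_(i in L) \sum_(j | j \notin L)
       es [set i] (L :\ i) * es [set j] (L :\ i) * X [set j] * D i (w (j |: (L :\ i))).
Proof.
move=> hX; rewrite ffunE -!big_split /=; apply: eq_bigr => i iL.
rewrite iprod_vectorE // (bigD1 i) /=; last by rewrite in_setD1 eqxx.
rewrite setD1K // (eq_bigl (fun j => j \notin L)); last first.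
  move=> j; rewrite in_setD1 negb_and negbK.
  by case: eqP => [->|]; rewrite ?iL /= ?andbT ?andbF.
rewrite derD der_sum mulrDr mulr_sumr -addrA; congr (_ + _).
  by rewrite -mulrA der_esign !derM mulrA esign_sqr mul1r.
rewrite -big_split /=; apply: eq_bigr => j _.
by rewrite -mulrA der_esign !derM; ring.
Qed.

Lemma lie_formE X w L : homog 1 X ->
  lie_form D X w L =
    \sum_(j < n) X [set j] * D j (w L) + \sum_(i in L) D i (X [set i]) * w L
  + \sum_(i in L) \sum_(j | j \notin L)
       es [set i] (L :\ i) * es [set j] (L :\ i) * D i (X [set j]) * w (j |: (L :\ i)).
Proof.
move=> hX; rewrite ffunE iprod_dextE // dext_iprodE // big_split /=.
by rewrite [\sum_(j < n) _](bigID (mem L)) /=; ring.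
Qed.

Lemma lie_mvE X P M :
  lie_mv D X P M = \sum_(j < n) X [set j] * D j (P M)
   - (\sum_(j in M) P M * D j (X [set j])
      + \sum_(j in M) \sum_(i | i \notin M)
          P (i |: (M :\ j)) * D i (X [set j]) * es [set i] (M :\ j) * es [set j] (M :\ j)).
Proof.
have contract (i j : 'I_n) :
    \sum_(I : {set 'I_n} | i \in I) (P I * D i (X [set j]) * es [set i] (I :\ i) *
      (if (j \in M) && (M :\ j == I :\ i) then es [set j] (M :\ j) else 0)) =
    if (j \in M) && (i \notin M :\ j) then
      P (i |: (M :\ j)) * D i (X [set j]) * es [set i] (M :\ j) * es [set j] (M :\ j)
    else 0.
  case: (boolP (j \in M)) => jM /=; last by rewrite big1 // => I _; rewrite mulr0.
  case: (boolP (i \in M :\ j)) => iM /=.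
    rewrite big1 // => I iI; case: eqP => [eI|]; last by rewrite mulr0.
    by move: iM; rewrite eI in_setD1 eqxx.
  rewrite (bigD1 (i |: (M :\ j))) ?setU11 //= setU1K // eqxx big1 ?addr0 //.
  move=> I /andP [iI nI]; case: eqP => [eI|]; last by rewrite mulr0.
  by move: nI; rewrite eI setD1K // eqxx.
rewrite /lie_mv !ffunE; congr (_ - _); rewrite !sum_ffunE.
under eq_bigr => I _ do rewrite !sum_ffunE.
under eq_bigr => I _ do under eq_bigr => i _ do rewrite sum_ffunE.
under eq_bigr => I _ do under eq_bigr => i _ do under eq_bigr => j _
  do rewrite mscaleE wedge_ebaseE.
rewrite (exchange_big_dep predT) //=.
under eq_bigr => i _ do rewrite exchange_big /=.
rewrite exchange_big /=.
under eq_bigr => j _ do under eq_bigr => i _ do rewrite contract.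
rewrite -big_split /= [RHS]big_mkcond /=.
apply: eq_bigr => j _; case: (boolP (j \in M)) => jM /=; last by rewrite big1.
rewrite -big_mkcond (bigD1 j) /=; last by rewrite in_setD1 eqxx.
rewrite setD1K // -mulrA esign_sqr mulr1; congr (_ + _).
apply: eq_bigl => i; rewrite in_setD1 negb_and negbK.
by case: eqP => [->|]; rewrite ?jM /= ?andbT ?andbF.
Qed.

(* The off-diagonal terms of [lie_formE] for [w = i_Lam Om] are, up to sign,
   those of [lie_mvE] at [~: L] contracted with [Om]. *)
Lemma iprod_volume_cross X Lam Om L : homog n Om ->
  \sum_(i in L) \sum_(j | j \notin L)
     es [set i] (L :\ i) * es [set j] (L :\ i) * D i (X [set j]) * iprod Lam Om (j |: (L :\ i))
  = - (es (~: L) L *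
      (\sum_(j in ~: L) \sum_(i | i \notin ~: L)
         Lam (i |: (~: L :\ j)) * D i (X [set j]) * es [set i] (~: L :\ j) * es [set j] (~: L :\ j))
      * Om setT).
Proof.
move=> hO; rewrite mulr_sumr mulr_suml -sumrN.
under [RHS]eq_bigr => j _ do rewrite mulr_sumr mulr_suml -sumrN.
rewrite [RHS]exchange_big [RHS](eq_bigl (mem L)) /=; last first.
  by move=> i; rewrite in_setC negbK.
apply: eq_bigr => i iL.
rewrite [RHS](eq_bigl (fun j => j \notin L)); last by move=> j; rewrite in_setC.
apply: eq_bigr => j jL; rewrite iprod_volumeE //.
have ij : i != j by apply: contraNneq jL => <-.
have eC : ~: (j |: (L :\ i)) = i |: (~: L :\ j).
  apply/setP => k; rewrite !inE.
  case: (eqVneq k i) => [->|ki]; first by rewrite iL (negbTE ij).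
  by case: (eqVneq k j) => [->|kj] //=; rewrite ?jL ?andbT.
have dLL : [disjoint ~: L :\ j & L :\ i].
  rewrite disjoints_subset; apply/subsetP => k; rewrite !inE.
  by case/andP => _ kL; rewrite negb_and kL orbT.
have iLi : i \notin L :\ i by rewrite in_setD1 eqxx.
have jLi : j \notin L :\ i by rewrite in_setD1 (negbTE jL) andbF.
have iCj : i \notin ~: L :\ j by rewrite in_setD1 in_setC iL andbF.
have jCj : j \notin ~: L :\ j by rewrite in_setD1 eqxx.
have sw := esign_swap2 A ij iLi jLi iCj jCj dLL.
rewrite !setD1K ?in_setC // in sw; rewrite eC.
transitivity ((es [set i] (L :\ i) * es [set j] (L :\ i) * es (i |: ~: L :\ j) (j |: L :\ i))
   * (D i (X [set j]) * Lam (i |: ~: L :\ j) * Om setT)); first by ring.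
by rewrite sw; ring.
Qed.

(* [L_X Om = divergence Om X * Om] for a top-degree form [Om]. *)
Definition divergence (Om X : ext) : A :=
  (Om setT)^-1 * vder X (Om setT) + \sum_(j < n) D j (X [set j]).

Lemma lie_form_iprod_volume X Lam Om :
  homog 1 X -> homog n Om -> Om setT \is a GRing.unit ->
  lie_form D X (iprod Lam Om) =
    iprod (lie_mv D X Lam) Om + mscale (divergence Om X) (iprod Lam Om).
Proof.
move=> hX hO hu; apply/ffunP => L.
rewrite lie_formE // iprod_volume_cross // iprod_volumeE // [RHS]ffunE mscaleE.
rewrite !iprod_volumeE // lie_mvE.
rewrite /divergence; set s := es (~: L) L; set lm := Lam (~: L); set h := Om setT in hu *.
have vder_slmh : \sum_(j < n) X [set j] * D j (s * lm * h) =
    s * (h * \sum_(j < n) X [set j] * D j lm + lm * vder X h).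
  rewrite /vder !mulr_sumr -big_split /= mulr_sumr; apply: eq_bigr => j _.
  by rewrite -mulrA der_esign derM -/s; ring.
have div_split : \sum_(j < n) D j (X [set j]) =
    \sum_(j in L) D j (X [set j]) + \sum_(j in ~: L) D j (X [set j]).
  rewrite (bigID (mem L)) /=; congr (_ + _).
  by apply: eq_bigl => j; rewrite in_setC.
have h_cancel : h^-1 * vder X h * (s * lm * h) = s * lm * vder X h.
  by rewrite -[RHS]mulr1 -(mulVr hu); ring.
rewrite vder_slmh div_split mulrDl h_cancel -mulr_sumr -mulr_suml; ring.
Qed.

End Derivations.

Section Deformations.
Variables (K : numFieldType) (A : comUnitAlgType K) (n : nat).
Variable D : 'I_n -> A -> A.
Hypothesis hD : coord_derivations D.
Notation ext := {ffun {set 'I_n} -> A}.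
Implicit Types (X P Pi : ext).

Section Volume.
Variables Om Lam : ext.
Hypotheses (homog_Om : homog n Om) (unit_Om : Om setT \is a GRing.unit).

Lemma Bform_iprod_volume Pi : Bform D (iprod Lam Om) (iprod Pi Om) <-> Bmv D Lam Pi.
Proof.
split=> -[X [f [hX e]]]; exists X.
  exists (divergence D Om X + f); split=> //; apply: (iprod_volume_inj homog_Om unit_Om).
  by rewrite e iprodDl iprod_mscalel mscaleDl addrA lie_form_iprod_volume.
exists (f - divergence D Om X); split=> //.
rewrite e iprodDl iprod_mscalel lie_form_iprod_volume // mscaleDl mscaleNl.
by rewrite addrACA subrr addr0.
Qed.

Lemma subquot_iso_iprod_volume q : (q <= n)%N ->
  subquot_iso (Zmv D q Om Lam) (Bmv D Lam)
              (Zform D (n - q) (iprod Lam Om)) (Bform D (iprod Lam Om)).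
Proof.
move=> qn; exists (fun P => iprod P Om); split.
- by move=> k x y; apply: iprod_linearl.
- by move=> x [].
- move=> y [hy Zy]; have [x hx exy] := iprod_volume_surj homog_Om unit_Om qn hy.
  exists x; first by split; rewrite ?exy.
  rewrite exy subrr; exists 0, 0; split; first exact: homog0.
  by rewrite lie_form0 // mscale0r addr0.
- by move=> x _; apply: Bform_iprod_volume.
Qed.

End Volume.

Section Rescaling.
Variables (Lam : ext) (u : A).
Hypothesis unit_u : u \is a GRing.unit.

Lemma mscaleK : cancel (@mscale _ _ n u) (mscale u^-1).
Proof. by move=> x; rewrite mscaleA mulVr ?mscale1. Qed.

Lemma mscaleKV : cancel (@mscale _ _ n u^-1) (mscale u).
Proof. by move=> x; rewrite mscaleA mulrV ?mscale1. Qed.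

Lemma Bmv_mscale Pi : Bmv D (mscale u Lam) (mscale u Pi) <-> Bmv D Lam Pi.
Proof.
split=> -[X [f [hX e]]]; exists X.
  exists (u^-1 * vder D X u + f); split=> //.
  rewrite -[Pi]mscaleK e lie_mv_mscale //; move: (lie_mv D X Lam) => lm.
  by rewrite !mscaleDr !mscaleA mulVr // mscale1 mulrAC mulVr // mul1r mscaleDl addrA.
exists (f - u^-1 * vder D X u); split=> //.
rewrite e lie_mv_mscale //; move: (lie_mv D X Lam) => lm.
rewrite mscaleA mulrBl mulrAC mulVr // mul1r mscaleDl mscaleNl.
by rewrite mscaleDr mscaleA mulrC addrACA subrr addr0.
Qed.

Lemma subquot_iso_mscale q Om : homog q Lam -> homog n Om -> (q <= n)%N ->
  subquot_iso (Zmv D q Om Lam) (Bmv D Lam)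
              (Zmv D q Om (mscale u Lam)) (Bmv D (mscale u Lam)).
Proof.
move=> hL hO qn; exists (mscale u); split.
- by move=> k x y; apply/ffunP => I; rewrite !ffunE mulrDr scalerAr.
- by move=> x; apply: Zmv_mscale.
- move=> y Zy; exists (mscale u^-1 y).
    by rewrite -[Lam]mscaleK; apply: Zmv_mscale => //; apply: homog_mscale.
  rewrite mscaleKV subrr; exists 0, 0; split; first exact: homog0.
  by rewrite lie_mv0 // mscale0r addr0.
- by move=> x _; apply: Bmv_mscale.
Qed.

End Rescaling.

End Deformations.

Theorem lemma3p1 (K : numFieldType) (A : comUnitAlgType K) (n q : nat)
    (D : 'I_n -> A -> A) (Lam Om : {ffun {set 'I_n} -> A}) (u : A) :
  coord_derivations D ->
  (q <= n)%N ->
  nambu D q Lam ->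
  volume_form Om ->
  u \is a GRing.unit ->
  let om := iprod Lam Om in
  subquot_iso (Zmv D q Om Lam) (Bmv D Lam) (Zform D (n - q) om) (Bform D om) /\
  subquot_iso (Zmv D q Om Lam) (Bmv D Lam)
              (Zmv D q Om (mscale u Lam)) (Bmv D (mscale u Lam)).
Proof.
move=> hD qn [hL _] [hO unit_Om] unit_u om; split.
- exact: subquot_iso_iprod_volume.
- exact: subquot_iso_mscale.
Qed.
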